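(* Let $D$ be a Dedekind domain and let $M$ be a nonzero finitely generated multiplication $D$-module. Then $M$ is isomorphic to a nonzero ideal of $D$ (e.g. $D$ itself) or to $D/I$ for some nonzero ideal $I$ of $D$.
   Context: All rings are commutative with $1$ and all modules are unital. An $R$-module $M$ is a multiplication module if every submodule of $M$ equals $IM$ for some ideal $I$ of $R$. *)

From HB Require Import structures.
From mathcomp Require Import all_boot all_order all_algebra.
From mathcomp Require Import fraction.
Set Implicit Arguments. Unset Strict Implicit. Unset Printing Implicit Defensive.
Import Order.TTheory GRing.Theory Num.Theory.
Local Open Scope ring_scope.

Definition is_ideal (R : comNzRingType) (I : R -> Prop) : Prop :=
  [/\ I 0, (forall a b, I a -> I b -> I (a + b)) &
      (forall r a, I a -> I (r * a))].

Definition is_prime_ideal (R : comNzRingType) (P : R -> Prop) : Prop :=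
  [/\ is_ideal P, ~ P 1 & forall a b, P (a * b) -> P a \/ P b].

Definition is_maximal_ideal (R : comNzRingType) (P : R -> Prop) : Prop :=
  [/\ is_ideal P, ~ P 1 &
      forall J : R -> Prop, is_ideal J -> (forall x, P x -> J x) ->
        (forall x, J x <-> P x) \/ J 1].

Definition nonzero_ideal (R : comNzRingType) (I : R -> Prop) : Prop :=
  is_ideal I /\ exists a, I a /\ a != 0.

Definition noetherian (R : comNzRingType) : Prop :=
  forall I : R -> Prop, is_ideal I ->
    exists s : seq R, forall x,
      I x <-> exists c : 'I_(size s) -> R, x = \sum_(i < size s) c i * s`_i.

Definition dim_le1 (R : comNzRingType) : Prop :=
  forall P : R -> Prop, is_prime_ideal P -> (exists a, P a /\ a != 0) ->
    is_maximal_ideal P.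

Definition integrally_closed (D : idomainType) : Prop :=
  forall x : {fraction D},
    (exists p : {poly D}, p \is monic /\ (map_poly (@tofrac D) p).[x] = 0) ->
    exists a : D, x = @tofrac D a.

Definition dedekind_domain (D : idomainType) : Prop :=
  [/\ noetherian D, integrally_closed D & dim_le1 D].

Definition is_submodule (R : comNzRingType) (M : lmodType R) (N : M -> Prop) :=
  [/\ N 0, (forall x y, N x -> N y -> N (x + y)) &
      (forall r x, N x -> N (r *: x))].

Definition ideal_times_module (R : comNzRingType) (M : lmodType R)
    (I : R -> Prop) : M -> Prop :=
  fun x => exists (n : nat) (r : 'I_n -> R) (m : 'I_n -> M),
    (forall i, I (r i)) /\ x = \sum_(i < n) r i *: m i.

Definition multiplication_module (R : comNzRingType) (M : lmodType R) : Prop :=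
  forall N : M -> Prop, is_submodule N ->
    exists I : R -> Prop, is_ideal I /\
      forall x, N x <-> ideal_times_module I x.

Definition finitely_generated (R : comNzRingType) (M : lmodType R) : Prop :=
  exists s : seq M, forall x : M,
    exists c : 'I_(size s) -> R, x = \sum_(i < size s) c i *: s`_i.

Definition nonzero_module (R : comNzRingType) (M : lmodType R) : Prop :=
  exists x : M, x != 0.

Definition iso_to_ideal (R : comNzRingType) (M : lmodType R) (J : R -> Prop) :=
  exists f : M -> R,
    [/\ forall r x y, f (r *: x + y) = r * f x + f y,
        injective f &
        forall a, J a <-> exists x, f x = a].

(* M is isomorphic to R/I: there is a surjective R-linear map R -> M with
   kernel exactly I (first isomorphism theorem). *)
Definition iso_to_quotient (R : comNzRingType) (M : lmodType R) (I : R -> Prop) :=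
  exists f : R -> M,
    [/\ forall r a b, f (r * a + b) = r *: f a + f b,
        (forall x : M, exists a, f a = x) &
        forall a, f a = 0 <-> I a].

(* If some element x of M has zero annihilator, the multiplication property
   forces M to be torsion-free, and a nonzero i with i M contained in D x gives
   an embedding m |-> r (where i m = r x) of M onto an ideal of D.
   Otherwise M is torsion, so its annihilator A is nonzero.  The finitely many
   minimal primes P over A are maximal (dimension <= 1), and PM <> M for each of
   them by a Nakayama-type argument that uses only the multiplication property.
   Prime avoidance gives g outside every PM; writing D g = I M, no maximal ideal
   contains I + A, so I + A = D and M = I M = D g, which is D / ann g. *)

From mathcomp Require Import all_boot all_order all_algebra.
From mathcomp Require Import ring.
From Stdlib Require Import Classical ClassicalEpsilon.
From Stdlib Require List.
Set Implicit Arguments. Unset Strict Implicit. Unset Printing Implicit Defensive.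
Import GRing.Theory.
Local Open Scope ring_scope.

Section Ideals.
Variable R : comNzRingType.
Implicit Types (I J B P Q : R -> Prop) (a b r x : R).

Lemma ideal0 I : is_ideal I -> I 0.
Proof. by case. Qed.

Lemma idealD I a b : is_ideal I -> I a -> I b -> I (a + b).
Proof. by case=> _ + _; apply. Qed.

Lemma idealMl I r a : is_ideal I -> I a -> I (r * a).
Proof. by case=> _ _; apply. Qed.

Lemma idealMr I a r : is_ideal I -> I a -> I (a * r).
Proof. by rewrite mulrC; apply: idealMl. Qed.

Lemma ideal_sum I n (F : 'I_n -> R) :
  is_ideal I -> (forall i, I (F i)) -> I (\sum_(i < n) F i).
Proof.
by move=> II FI; apply: big_ind => // [|a b]; [exact: ideal0 | exact: idealD].
Qed.

Definition ideal_add I J : R -> Prop := fun x => exists i j, [/\ I i, J j & x = i + j].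

Definition principal a : R -> Prop := fun x => exists r, x = r * a.

Lemma ideal_add_ideal I J : is_ideal I -> is_ideal J -> is_ideal (ideal_add I J).
Proof.
move=> II JI; split.
- by exists 0, 0; rewrite addr0; split => //; exact: ideal0.
- move=> _ _ [i [j [Ii Jj ->]]] [i' [j' [Ii' Jj' ->]]].
  by exists (i + i'), (j + j'); split; [exact: idealD | exact: idealD | ring].
- move=> r _ [i [j [Ii Jj ->]]].
  by exists (r * i), (r * j); split; [exact: idealMl | exact: idealMl | ring].
Qed.

Lemma ideal_addl I J x : is_ideal J -> I x -> ideal_add I J x.
Proof. by move=> JI Ix; exists x, 0; rewrite addr0; split => //; exact: ideal0. Qed.

Lemma ideal_addr I J x : is_ideal I -> J x -> ideal_add I J x.
Proof. by move=> II Jx; exists 0, x; rewrite add0r; split => //; exact: ideal0. Qed.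

Lemma principal_ideal a : is_ideal (principal a).
Proof.
split; first by exists 0; rewrite mul0r.
- by move=> _ _ [r ->] [s ->]; exists (r + s); rewrite mulrDl.
- by move=> r _ [s ->]; exists (r * s); rewrite mulrA.
Qed.

Lemma principal_self a : principal a a.
Proof. by exists 1; rewrite mul1r. Qed.

Lemma maximal_invertible_mod P e :
  is_maximal_ideal P -> ~ P e -> exists r, P (1 - r * e).
Proof.
move=> [PI _ Pmax] Pe.
have Pe_ideal := ideal_add_ideal PI (principal_ideal e).
case: (Pmax _ Pe_ideal (fun x => @ideal_addl _ _ x (principal_ideal e))) => [Peq|].
  by case: Pe; apply/Peq/ideal_addr => //; exact: principal_self.
move=> [p [_ [Pp [r ->] E]]]; exists r.
by have -> : 1 - r * e = p by rewrite E; ring.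
Qed.

Lemma maximal_prime P : is_maximal_ideal P -> is_prime_ideal P.
Proof.
move=> Pmax; have [PI P1 _] := Pmax; split => // a b Pab.
case: (classic (P a)) => Pa; [by left | right].
have [r Pr] := maximal_invertible_mod Pmax Pa.
have -> : b = (1 - r * a) * b + r * (a * b) by ring.
by apply: (idealD PI); [exact: idealMr | exact: idealMl].
Qed.

Lemma prime_avoid_product P (L : list (R -> Prop)) :
  is_prime_ideal P ->
  (forall Q, List.In Q L -> is_ideal Q /\ exists q, Q q /\ ~ P q) ->
  exists e, ~ P e /\ forall Q, List.In Q L -> Q e.
Proof.
move=> [_ P1 Pprime]; elim: L => [|Q L IH] HL; first by exists 1.
have [e [Pe Le]] := IH (fun Q' h => HL Q' (or_intror h)).
have [QI [q [Qq Pq]]] := HL Q (or_introl erefl).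
exists (q * e); split; first by case/Pprime.
move=> Q' /= [<-|h]; first exact: idealMr.
by apply: idealMl (Le _ h); case: (HL Q' (or_intror h)).
Qed.

End Ideals.

Section Noetherian.
Variable R : comNzRingType.
Hypothesis noethR : noetherian R.
Implicit Types (B P Q : R -> Prop).

Lemma noetherian_chain_stationary (ch : nat -> R -> Prop) :
  (forall n, is_ideal (ch n)) -> (forall n x, ch n x -> ch n.+1 x) ->
  exists N, forall x, ch N.+1 x -> ch N x.
Proof.
move=> chI chS.
have chmono m n x : (m <= n)%N -> ch m x -> ch n x.
  by move/subnK <-; elim: (n - m)%N => [//|k IH] /IH; rewrite addSn; exact: chS.
pose U x := exists n, ch n x.
have UI : is_ideal U.
  split; first by exists 0%N; exact: ideal0.
  - move=> x y [m Hx] [n Hy]; exists (maxn m n).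
    by apply: (idealD (chI _)); [apply: (chmono m) Hx | apply: (chmono n) Hy];
      rewrite ?leq_maxl ?leq_maxr.
  - by move=> r x [n Hx]; exists n; exact: idealMl.
have [s Us] := noethR UI.
have gensU i : U s`_i.
  have [lti | ?] := ltnP i (size s); last by rewrite nth_default //; exact: ideal0.
  apply/Us; exists (fun j : 'I_(size s) => (j == i :> nat)%:R).
  rewrite (bigD1 (Ordinal lti)) //= eqxx mul1r big1 ?addr0 // => j.
  by rewrite -val_eqE /= => /negbTE ->; rewrite mul0r.
have [N gensN] : exists N, forall i, (i < size s)%N -> ch N s`_i.
  elim: (size s) => [|k [N HN]]; first by exists 0%N.
  have [n Hn] := gensU k; exists (maxn N n) => i; rewrite ltnS leq_eqVlt.
  case/orP => [/eqP -> | /HN]; [apply: (chmono n) Hn | apply: chmono];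
    by rewrite ?leq_maxl ?leq_maxr.
exists N => x Hx; have [c ->] := (Us x).1 (ex_intro _ N.+1 Hx).
by apply: ideal_sum => // i; apply: idealMl => //; exact: gensN.
Qed.

Lemma noetherian_ind (Phi : (R -> Prop) -> Prop) :
  (forall B, is_ideal B ->
     (forall B', is_ideal B' -> (forall x, B x -> B' x) ->
        (exists x, B' x /\ ~ B x) -> Phi B') -> Phi B) ->
  forall B, is_ideal B -> Phi B.
Proof.
move=> step B0 B0I; apply: NNPP => nPhiB0.
pose bad := {B | is_ideal B /\ ~ Phi B}.
have grow (c : bad) : {c' : bad | (forall x, sval c x -> sval c' x) /\
                                  exists x, sval c' x /\ ~ sval c x}.
  case: c => B [BI nPhiB]; apply: constructive_indefinite_description.
  apply: NNPP => none; apply: (nPhiB); apply: step => // B' B'I sub str.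
  apply: NNPP => nPhiB'; apply: none.
  by exists (exist _ B' (conj B'I nPhiB')).
pose chain n := iter n (fun c => sval (grow c)) (exist _ B0 (conj B0I nPhiB0)).
have [N chN] : exists N, forall x, sval (chain N.+1) x -> sval (chain N) x.
  apply: noetherian_chain_stationary => [n | n x].
    by case: (chain n) => ? [].
  exact: (proj1 (svalP (grow (chain n))) x).
by have [x [Hx nHx]] := proj2 (svalP (grow (chain N))); apply/nHx/chN.
Qed.

Lemma noetherian_maximal_over B :
  is_ideal B -> ~ B 1 -> exists P, is_maximal_ideal P /\ forall x, B x -> P x.
Proof.
move: B; apply: noetherian_ind => B BI IH nB1.
case: (classic (is_maximal_ideal B)) => [Bmax | nBmax]; first by exists B.
have [J [JI BJ nJB nJ1]] : exists J, [/\ is_ideal J, forall x, B x -> J x,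
                              ~ (forall x, J x <-> B x) & ~ J 1].
  apply: NNPP => none; apply: nBmax; split => // J JI BJ.
  case: (classic (forall x, J x <-> B x)) => [|nJB]; first by left.
  by right; apply: NNPP => nJ1; apply: none; exists J.
have [x [Jx nBx]] : exists x, J x /\ ~ B x.
  apply: NNPP => none; apply: nJB => x; split => [Jx|/BJ //].
  by apply: NNPP => nBx; apply: none; exists x.
have [P [Pmax JP]] := IH J JI BJ (ex_intro _ x (conj Jx nBx)) nJ1.
by exists P; split => // y /BJ /JP.
Qed.

Definition primes_cover B (L : list (R -> Prop)) :=
  (forall P, List.In P L -> is_prime_ideal P /\ forall x, B x -> P x) /\
  (forall Q, is_prime_ideal Q -> (forall x, B x -> Q x) ->
     exists P, List.In P L /\ forall x, P x -> Q x).

Lemma noetherian_primes_cover B : is_ideal B -> exists L, primes_cover B L.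
Proof.
move: B; apply: noetherian_ind => B BI IH.
case: (classic (B 1)) => B1.
  by exists nil; split => //= Q [_ Q1 _] /(_ _ B1).
case: (classic (is_prime_ideal B)) => Bprime.
  by exists (B :: nil); split => [P [<-|[]] | Q _ BQ] //; exists B; split; [left|].
have [a [b [Bab nBa nBb]]] : exists a b, [/\ B (a * b), ~ B a & ~ B b].
  apply: NNPP => none; apply: Bprime; split => // a b Bab.
  by apply: NNPP => /not_or_and [nBa nBb]; apply: none; exists a, b.
have cover_add c : ~ B c -> exists L, primes_cover (ideal_add B (principal c)) L.
  move=> nBc; apply: IH; [exact: ideal_add_ideal (principal_ideal c)
                        | move=> x; exact: ideal_addl (principal_ideal c)|].
  by exists c; split => //; apply: ideal_addr => //; exact: principal_self.
have [La [La_prime La_min]] := cover_add a nBa.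
have [Lb [Lb_prime Lb_min]] := cover_add b nBb.
exists (La ++ Lb); split.
  move=> P /List.in_app_iff [/La_prime | /Lb_prime] [Pprime Psup];
    by split => // x Bx; apply: Psup; apply: ideal_addl (principal_ideal _) Bx.
move=> Q Qprime BQ; have [QI _ Qprime'] := Qprime.
have addQ c : Q c -> forall x, ideal_add B (principal c) x -> Q x.
  by move=> Qc x [i [j [/BQ Qi [r ->] ->]]]; apply: idealD => //; exact: idealMl.
case: (Qprime' a b (BQ _ Bab)) => [/addQ | /addQ] sub.
  have [P [PL PQ]] := La_min Q Qprime sub.
  by exists P; split => //; apply/List.in_app_iff; left.
have [P [PL PQ]] := Lb_min Q Qprime sub.
by exists P; split => //; apply/List.in_app_iff; right.
Qed.

End Noetherian.

Section Modules.
Variables (R : comNzRingType) (M : lmodType R).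
Implicit Types (I J P Q : R -> Prop) (x y z g m : M) (s : seq M).

(* In lemma names, [IM] stands for the submodule [ideal_times_module I] of [M]. *)

Lemma IM_gen I r z : I r -> ideal_times_module I (r *: z).
Proof.
by move=> Ir; exists 1%N, (fun _ => r), (fun _ => z); rewrite big_ord1.
Qed.

Lemma IMD I x y :
  ideal_times_module I x -> ideal_times_module I y -> ideal_times_module I (x + y).
Proof.
move=> [n1 [r1 [m1 [I1 ->]]]] [n2 [r2 [m2 [I2 ->]]]].
exists (n1 + n2)%N,
  (fun i => match split i with inl j => r1 j | inr j => r2 j end),
  (fun i => match split i with inl j => m1 j | inr j => m2 j end).
split; first by move=> i; case: (split i).
rewrite big_split_ord /=; congr (_ + _); apply: eq_bigr => i _.
  by rewrite (unsplitK (inl i)).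
by rewrite (unsplitK (inr i)).
Qed.

Lemma IMZ I c x :
  is_ideal I -> ideal_times_module I x -> ideal_times_module I (c *: x).
Proof.
move=> II [n [r [z [Ir ->]]]]; exists n, (fun i => c * r i), z.
split; first by move=> i; exact: idealMl.
by rewrite scaler_sumr; apply: eq_bigr => i _; rewrite scalerA.
Qed.

Lemma IMB I x y : is_ideal I ->
  ideal_times_module I x -> ideal_times_module I y -> ideal_times_module I (x - y).
Proof. by move=> II Ix Iy; apply: IMD Ix _; rewrite -scaleN1r; exact: IMZ. Qed.

Lemma IM_subset I J x : (forall a, I a -> J a) ->
  ideal_times_module I x -> ideal_times_module J x.
Proof. by move=> IJ [n [r [z [Ir ->]]]]; exists n, r, z; split => // i; exact: IJ. Qed.

Lemma IM_nonzero_coef I x :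
  x != 0 -> ideal_times_module I x -> exists2 i, I i & i != 0.
Proof.
move=> /eqP nx0 [n [r [z [Ir Ex]]]]; apply: NNPP => none; apply: nx0.
rewrite Ex big1 // => i _; suff -> : r i = 0 by rewrite scale0r.
by apply: NNPP => /eqP ri0; apply: none; exists (r i).
Qed.

Definition cyclic_span g : M -> Prop := fun y => exists r, y = r *: g.

Lemma multiplication_cyclic g : multiplication_module M ->
  exists I, is_ideal I /\ forall y, cyclic_span g y <-> ideal_times_module I y.
Proof.
move=> Mmult; apply: Mmult; split; first by exists 0; rewrite scale0r.
- by move=> _ _ [r ->] [r' ->]; exists (r + r'); rewrite scalerDl.
- by move=> c _ [r ->]; exists (c * r); rewrite scalerA.
Qed.

Definition ann g : R -> Prop := fun a => a *: g = 0.

Definition annihilator : R -> Prop := fun a => forall m, a *: m = 0.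

Lemma ann_ideal g : is_ideal (ann g).
Proof.
split; first by rewrite /ann scale0r.
- by move=> a b; rewrite /ann scalerDl => -> ->; rewrite addr0.
- by move=> r a; rewrite /ann -scalerA => ->; rewrite scaler0.
Qed.

Lemma annihilator_ideal : is_ideal annihilator.
Proof.
split; first by move=> m; rewrite scale0r.
- by move=> a b Ha Hb m; rewrite scalerDl Ha Hb addr0.
- by move=> r a Ha m; rewrite -scalerA Ha scaler0.
Qed.

Definition spans s :=
  forall x, exists c : 'I_(size s) -> R, x = \sum_(i < size s) c i *: s`_i.

Lemma annihilator_of_gens s u :
  spans s -> (forall y, y \in s -> u *: y = 0) -> annihilator u.
Proof.
move=> gen_s us m; have [c ->] := gen_s m.
rewrite scaler_sumr big1 // => i _; rewrite scalerA mulrC -scalerA us ?scaler0 //.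
exact: mem_nth.
Qed.

Lemma cyclic_iso_quotient g :
  (forall m, cyclic_span g m) -> iso_to_quotient M (ann g).
Proof.
move=> Mg; exists (fun a => a *: g); split => //.
- by move=> r a b; rewrite scalerDl scalerA.
- by move=> m; have [r ->] := Mg m; exists r.
Qed.

Lemma IM_avoidance (L : list (R -> Prop)) :
  (forall P, List.In P L ->
     is_maximal_ideal P /\ exists x, ~ ideal_times_module P x) ->
  exists g, forall P, List.In P L -> ~ ideal_times_module P g.
Proof.
elim: L => [|P L IH] HL; first by exists 0.
have [g Lg] := IH (fun Q QL => HL Q (or_intror QL)).
have [Pmax [x Px]] := HL P (or_introl erefl); have [PI P1 _] := Pmax.
case: (classic (ideal_times_module P g)) => Pg; last by exists g => Q /= [<-|/Lg].
have [e [Pe Le]] : exists e, ~ P e /\ forall Q, List.In Q L -> Q e.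
  apply: prime_avoid_product (maximal_prime Pmax) _ => Q QL.
  have [[QI Q1 Qmax] _] := HL Q (or_intror QL); split => //.
  (* [Q] inside [P] would force [P = Q] by maximality, and then [g] lies in [QM]. *)
  apply: NNPP => QnP; apply: (Lg Q QL).
  have QP q : Q q -> P q by move=> Qq; apply: NNPP => Pq; apply: QnP; exists q.
  case: (Qmax P PI QP) => [PQ|/P1 //]; apply: IM_subset Pg => a; exact: (PQ a).1.
have [r Pr] := maximal_invertible_mod Pmax Pe.
exists (g + e *: x) => Q /= [<-|QL] Qgex.
  have Pex : ideal_times_module P (e *: x).
    by rewrite -(addKr g (e *: x)) addrC; exact: IMB.
  apply: Px; have -> : x = r *: (e *: x) + (1 - r * e) *: x.
    by rewrite scalerA -scalerDl addrC subrK scale1r.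
  by apply: IMD; [exact: IMZ | exact: IM_gen].
have QI : is_ideal Q by have [[]] := HL Q (or_intror QL).
apply: (Lg Q QL); rewrite -(addrK (e *: x) g); apply: IMB => //.
exact: IM_gen (Le Q QL).
Qed.

Section Multiplication.
Hypothesis Mmult : multiplication_module M.

Lemma IM_full_fixed P : is_ideal P -> (forall x, ideal_times_module P x) ->
  forall m, exists2 p, P p & m = p *: m.
Proof.
move=> PI PM m; have [I [II Im]] := multiplication_cyclic m Mmult.
have [n [r [z [Ir Em]]]] : ideal_times_module I m by apply/Im; exists 1; rewrite scale1r.
pose T y := exists2 p, P p & y = p *: m.
have T0 : T 0 by exists 0; [exact: ideal0 | rewrite scale0r].
have TD y y' : T y -> T y' -> T (y + y').
  by move=> [p Pp ->] [q Pq ->]; exists (p + q); [exact: idealD | rewrite scalerDl].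
suff : T m by [].
rewrite [X in T X]Em; apply: big_ind => // k _.
have [n' [q [w [Pq ->]]]] := PM (z k); rewrite scaler_sumr.
apply: big_ind => // l _.
have [c Ec] : cyclic_span m (r k *: w l) by apply/Im; exact: IM_gen.
exists (q l * c); first exact: idealMr.
by rewrite -scalerA -Ec !scalerA mulrC.
Qed.

Lemma fixed_seq_killer P (l : seq M) : is_ideal P ->
  (forall m, exists2 p, P p & m = p *: m) ->
  exists2 u, P (1 - u) & forall y, y \in l -> u *: y = 0.
Proof.
move=> PI Pfix; elim: l => [|y l [u Pu lu]].
  by exists 1 => //; rewrite subrr; exact: ideal0.
have [p Pp Ey] := Pfix y.
exists ((1 - p) * u).
  have -> : 1 - (1 - p) * u = (1 - u) + p * u by ring.
  by apply: idealD => //; exact: idealMr.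
move=> z; rewrite in_cons => /orP [/eqP -> | /lu zu].
  by rewrite mulrC -scalerA scalerBl scale1r -Ey subrr scaler0.
by rewrite -scalerA zu scaler0.
Qed.

Lemma IM_proper P s : spans s -> is_ideal P -> ~ P 1 ->
  (forall r, annihilator r -> P r) -> exists x, ~ ideal_times_module P x.
Proof.
move=> gen_s PI P1 annP; apply: NNPP => none.
have PM x : ideal_times_module P x by apply: NNPP => nPx; apply: none; exists x.
have [u Pu su] := fixed_seq_killer s PI (IM_full_fixed PI PM).
apply: P1; have -> : (1 : R) = (1 - u) + u by ring.
by apply: (idealD PI Pu); apply: annP; exact: annihilator_of_gens gen_s su.
Qed.

End Multiplication.

End Modules.

Lemma linear_image_ideal (R : comNzRingType) (M : lmodType R) (f : M -> R) :
  (forall r x y, f (r *: x + y) = r * f x + f y) ->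
  is_ideal (fun a => exists y, f y = a).
Proof.
move=> flin; have f0 : f 0 = 0.
  by have := flin (-1) 0 0; rewrite scaler0 addr0 mulN1r addNr.
split; first by exists 0.
- move=> _ _ [y <-] [z <-]; exists (y + z).
  by have := flin 1 y z; rewrite scale1r mul1r.
- by move=> r _ [y <-]; exists (r *: y); rewrite -[r *: y]addr0 flin f0 addr0.
Qed.

Section TorsionFree.
Variables (D : idomainType) (M : lmodType D) (x : M).
Hypotheses (Mmult : multiplication_module M) (x_tf : forall a : D, a *: x = 0 -> a = 0).

Lemma scale_tf_inj (r s : D) : r *: x = s *: x -> r = s.
Proof.
by move=> E; apply/eqP; rewrite -subr_eq0; apply/eqP/x_tf; rewrite scalerBl E subrr.
Qed.

Lemma mult_module_scale_into_span :
  exists2 i : D, i != 0 & forall m : M, cyclic_span x (i *: m).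
Proof.
have [I [II Ix]] := multiplication_cyclic x Mmult.
have x_neq0 : x != 0.
  apply/eqP => x0; have := @x_tf 1; rewrite x0 scaler0 => /(_ erefl) /eqP.
  by rewrite oner_eq0.
have [i Ii i_neq0] : exists2 i, I i & i != 0.
  by apply: (IM_nonzero_coef x_neq0); apply/Ix; exists 1; rewrite scale1r.
by exists i => // m; apply/Ix; exact: IM_gen.
Qed.

Lemma mult_module_torsion_free (a : D) (m : M) : a != 0 -> a *: m = 0 -> m = 0.
Proof.
move=> a_neq0 am0; apply: NNPP => /eqP m_neq0.
have [I [II Im]] := multiplication_cyclic m Mmult.
have [i Ii i_neq0] : exists2 i, I i & i != 0.
  by apply: (IM_nonzero_coef m_neq0); apply/Im; exists 1; rewrite scale1r.
have [r Er] : cyclic_span m (i *: x) by apply/Im; exact: IM_gen.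
suff /x_tf/eqP : (a * i) *: x = 0 by rewrite mulf_eq0 (negbTE a_neq0) (negbTE i_neq0).
by rewrite -scalerA Er scalerA mulrC -scalerA am0 scaler0.
Qed.

Lemma mult_module_iso_ideal : exists J, nonzero_ideal J /\ iso_to_ideal M J.
Proof.
have [i i_neq0 iM] := mult_module_scale_into_span.
pose f m := sval (constructive_indefinite_description _ (iM m)).
have fP m : i *: m = f m *: x := svalP (constructive_indefinite_description _ (iM m)).
have flin r m m' : f (r *: m + m') = r * f m + f m'.
  apply: scale_tf_inj.
  by rewrite -fP scalerDr scalerA mulrC -scalerA fP scalerDl scalerA fP.
exists (fun a => exists m, f m = a); split; last first.
  exists f; split => // m m' fmm'; apply/eqP; rewrite -subr_eq0; apply/eqP.
  by apply: (mult_module_torsion_free i_neq0); rewrite scalerBr !fP fmm' subrr.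
split; first exact: linear_image_ideal.
by exists i; split => //; exists x; apply: scale_tf_inj; rewrite -fP.
Qed.

End TorsionFree.

Lemma torsion_annihilator_nonzero (D : idomainType) (M : lmodType D) (s : seq M) :
  spans s -> (forall m : M, exists2 a : D, a != 0 & a *: m = 0) ->
  exists2 a : D, a != 0 & annihilator M a.
Proof.
move=> gen_s tors.
suff [a a_neq0 sa] : exists2 a : D, a != 0 & forall y, y \in s -> a *: y = 0.
  by exists a => //; exact: annihilator_of_gens gen_s sa.
elim: (s) => [|y l [a a_neq0 la]]; first by exists 1; rewrite ?oner_eq0.
have [b b_neq0 yb] := tors y.
exists (b * a); first by rewrite mulf_neq0.
move=> z; rewrite in_cons => /orP [/eqP -> | /la za].
  by rewrite mulrC -scalerA yb scaler0.
by rewrite -scalerA za scaler0.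
Qed.

Lemma mult_module_cyclic (R : comNzRingType) (M : lmodType R) (s : seq M) (a0 : R) :
  noetherian R -> dim_le1 R -> multiplication_module M -> spans s ->
  a0 != 0 -> annihilator M a0 -> exists g : M, forall m, cyclic_span g m.
Proof.
move=> noethR dimR Mmult gen_s a0_neq0 a0ann.
have annI := annihilator_ideal M.
have [L [L_prime L_min]] := noetherian_primes_cover noethR annI.
have L_max P : List.In P L -> is_maximal_ideal P.
  move=> PL; have [Pprime annP] := L_prime P PL.
  by apply: dimR => //; exists a0; split => //; exact: annP.
have [g Lg] : exists g : M, forall P, List.In P L -> ~ ideal_times_module P g.
  apply: IM_avoidance => P PL; split; first exact: L_max.
  by have [[PI P1 _] annP] := L_prime P PL; exact: IM_proper gen_s PI P1 annP.
have [I [II Ig]] := multiplication_cyclic g Mmult.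
have [i [a [Ii anna E1]]] : ideal_add I (annihilator M) 1.
  (* Otherwise a maximal ideal over [I + ann M] contains, hence equals, some
     [P] in [L], and [g] would lie in [PM]. *)
  apply: NNPP => nIA1.
  have [P' [P'max IAP']] :=
    noetherian_maximal_over noethR (ideal_add_ideal II annI) nIA1.
  have [P [PL PP']] :=
    L_min P' (maximal_prime P'max) (fun x ax => IAP' x (ideal_addr II ax)).
  have [P'I nP'1 _] := P'max; have [_ _ Pmax] := L_max P PL.
  case: (Pmax P' P'I PP') => [P'P | /nP'1 []].
  apply: (Lg P PL); apply: (IM_subset (I := I)) => [b Ib|].
    exact/P'P/IAP'/ideal_addl.
  by apply/Ig; exists 1; rewrite scale1r.
exists g => m; apply/Ig.
have -> : m = i *: m by rewrite -[m in LHS]scale1r E1 scalerDl anna addr0.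
exact: IM_gen.
Qed.

Theorem mainTheorem9 (D : idomainType) (M : lmodType D) :
  dedekind_domain D ->
  nonzero_module M -> finitely_generated M -> multiplication_module M ->
  (exists J : D -> Prop, nonzero_ideal J /\ iso_to_ideal M J) \/
  (exists I : D -> Prop, nonzero_ideal I /\ iso_to_quotient M I).
Proof.
move=> [noethD _ dimD] _ [s gen_s] Mmult.
case: (classic (exists x : M, forall a, a *: x = 0 -> a = 0)) => [[x x_tf]|no_tf].
  by left; exact: mult_module_iso_ideal Mmult x_tf.
right.
have tors (m : M) : exists2 a : D, a != 0 & a *: m = 0.
  apply: NNPP => none; apply: no_tf; exists m => a am0.
  by apply: NNPP => /eqP a_neq0; apply: none; exists a.
have [a0 a0_neq0 a0ann] := torsion_annihilator_nonzero gen_s tors.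
have [g Mg] := mult_module_cyclic noethD dimD Mmult gen_s a0_neq0 a0ann.
exists (ann g); split; last exact: cyclic_iso_quotient.
by split; [exact: ann_ideal | exists a0; split].
Qed.
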